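(* Let $(\mathcal{A},[-,-],\alpha)$ be a multiplicative Hom-Malcev superalgebra. Then for every $n\geq0$ the derived Hom-superalgebra $\mathcal{A}^{n}=(\mathcal{A},[-,-]^{(n)}=\alpha^{2^{n}-1}\circ[-,-],\alpha^{2^{n}})$ is also a Hom-Malcev superalgebra.
   Context: $\mathcal{A}=\mathcal{A}_0\oplus\mathcal{A}_1$ is a $\mathbb{Z}_2$-graded vector space over an algebraically closed field $\mathbb{K}$ of characteristic $0$; $|x|$ is the parity of homogeneous $x$; even maps preserve parity. For an even bilinear bracket $[-,-]$ and even linear $\alpha$, $\widetilde{J}(x,y,z)=[[x,y],\alpha(z)]-[\alpha(x),[y,z]]-(-1)^{|y||z|}[[x,z],\alpha(y)]$. A Hom-Malcev superalgebra is a triple $(\mathcal{A},[-,-],\alpha)$ with $\alpha\circ[-,-]=[-,-]\circ(\alpha\otimes\alpha)$, $[x,y]=-(-1)^{|x||y|}[y,x]$, and for all homogeneous $x,y,z,t$: $2[\alpha^{2}(t),\widetilde{J}(x,y,z)]=\widetilde{J}(\alpha(t),\alpha(x),[y,z])+(-1)^{|x|(|y|+|z|)}\widetilde{J}(\alpha(t),\alpha(y),[z,x])+(-1)^{|z|(|x|+|y|)}\widetilde{J}(\alpha(t),\alpha(z),[x,y])$. *)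

From HB Require Import structures.
From mathcomp Require Import all_boot all_order all_algebra.
Set Implicit Arguments. Unset Strict Implicit. Unset Printing Implicit Defensive.
Import Order.TTheory GRing.Theory Num.Theory.
Local Open Scope ring_scope.

(* A Z2-graded vector space A = A0 (+) A1 is modelled as the product
   A0 * A1 of two K-vector spaces.  An element x is homogeneous of parity
   b (false = even, true = odd) when its component of the other parity
   vanishes. *)
Section Super.
Variables (K : fieldType) (A0 A1 : lmodType K).
Local Notation A := (A0 * A1)%type.

Definition homog (b : bool) (x : A) : Prop :=
  if b then x.1 = 0 else x.2 = 0.

Definition sgn (n : nat) : K := (-1) ^+ n.

Definition bilinear_map (br : A -> A -> A) : Prop :=
  (forall x, linear (br x)) /\ (forall y, linear (fun x => br x y)).

Definition even_bracket (br : A -> A -> A) : Prop :=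
  forall (bx by' : bool) (x y : A), homog bx x -> homog by' y ->
    homog (bx (+) by') (br x y).

Definition even_map (f : A -> A) : Prop :=
  linear f /\ forall (b : bool) (x : A), homog b x -> homog b (f x).

Definition superJ (br : A -> A -> A) (alpha : A -> A)
  (by' bz : bool) (x y z : A) : A :=
  br (br x y) (alpha z) - br (alpha x) (br y z)
  - sgn (by' * bz) *: br (br x z) (alpha y).

Definition HomMalcevSuper (br : A -> A -> A) (alpha : A -> A) : Prop :=
  [/\ bilinear_map br, even_bracket br, even_map alpha &
   [/\
      (forall x y, alpha (br x y) = br (alpha x) (alpha y)),
      (forall (bx by' : bool) (x y : A), homog bx x -> homog by' y ->
          br x y = - (sgn (bx * by') *: br y x)) &
      (forall (bx by' bz bt : bool) (x y z t : A),
          homog bx x -> homog by' y -> homog bz z -> homog bt t ->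
          2%:R *: br (alpha (alpha t)) (superJ br alpha by' bz x y z) =
            superJ br alpha (bx) (by' (+) bz) (alpha t) (alpha x) (br y z)
          + sgn (bx * (by' + bz)) *:
              superJ br alpha by' (bz (+) bx) (alpha t) (alpha y) (br z x)
          + sgn (bz * (bx + by')) *:
              superJ br alpha bz (bx (+) by') (alpha t) (alpha z) (br x y))]].

Definition derived_bracket (br : A -> A -> A) (alpha : A -> A) (n : nat) :=
  fun x y => iter (2 ^ n - 1) alpha (br x y).
Definition derived_twist (alpha : A -> A) (n : nat) := iter (2 ^ n) alpha.

End Super.

From HB Require Import structures.
From mathcomp Require Import all_boot all_order all_algebra.
Set Implicit Arguments. Unset Strict Implicit. Unset Printing Implicit Defensive.
Import GRing.Theory.
Local Open Scope ring_scope.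

(* Twisting principle: if g is an even linear endomorphism that is multiplicative
   for [-,-] and commutes with alpha, then (A, g o [-,-], alpha o g) is again a
   Hom-Malcev superalgebra, because every twisted Jacobiator is g^2 applied to
   the untwisted one and both sides of the Malcev identity pick up the factor
   g^3.  The n-th derived algebra is the twist by g = alpha^(2^n - 1). *)

Section LinearFacts.
Variables (R : pzRingType) (U V : lmodType R) (f : U -> V).
Hypothesis lin_f : linear f.

Lemma linear_fun0 : f 0 = 0.
Proof.
have h := lin_f 1 0 0; rewrite !scale1r addr0 in h.
by apply: (addrI (f 0)); rewrite addr0 -h.
Qed.

Lemma linear_funD u v : f (u + v) = f u + f v.
Proof. by have := lin_f 1 u v; rewrite !scale1r. Qed.

Lemma linear_funZ a u : f (a *: u) = a *: f u.
Proof. by rewrite -[a *: u]addr0 lin_f linear_fun0 addr0. Qed.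

Lemma linear_funN u : f (- u) = - f u.
Proof. by rewrite -scaleN1r linear_funZ scaleN1r. Qed.

Lemma linear_funB u v : f (u - v) = f u - f v.
Proof. by rewrite linear_funD linear_funN. Qed.

End LinearFacts.

Section Twist.
Variables (K : fieldType) (A0 A1 : lmodType K).
Local Notation A := (A0 * A1)%type.
Implicit Types (br : A -> A -> A) (f g alpha : A -> A).

Lemma linear_iter f m : linear f -> linear (iter m f).
Proof. by move=> lf; elim: m => [|m IH] a u v //=; rewrite IH lf. Qed.

Lemma even_map_iter f m : even_map f -> even_map (iter m f).
Proof.
case=> lf ef; split; first exact: linear_iter.
by move=> b x hx; elim: m => [|m IH] //=; apply: ef.
Qed.

Lemma iter_morph2 br f m :
  (forall x y, f (br x y) = br (f x) (f y)) ->
  forall x y, iter m f (br x y) = br (iter m f x) (iter m f y).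
Proof. by move=> fM x y; elim: m => [|m IH] //=; rewrite IH fM. Qed.

Section TwistedJacobiator.
Variables (br : A -> A -> A) (alpha g : A -> A).
Hypotheses (lin_g : linear g) (gM : forall x y, g (br x y) = br (g x) (g y))
           (g_alpha : forall x, g (alpha x) = alpha (g x)).

Lemma superJ_morph p q x y z :
  g (superJ br alpha p q x y z) = superJ br alpha p q (g x) (g y) (g z).
Proof.
by rewrite /superJ !(linear_funB lin_g) (linear_funZ lin_g) !gM !g_alpha.
Qed.

Lemma superJ_twist p q x y z :
  superJ (fun u v => g (br u v)) (fun u => alpha (g u)) p q x y z =
  g (g (superJ br alpha p q x y z)).
Proof.
rewrite /superJ !(linear_funB lin_g) !(linear_funZ lin_g).
by rewrite !gM !g_alpha.
Qed.

End TwistedJacobiator.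

Theorem HomMalcevSuper_twist br alpha g :
  HomMalcevSuper br alpha -> even_map g ->
  (forall x y, g (br x y) = br (g x) (g y)) ->
  (forall x, g (alpha x) = alpha (g x)) ->
  HomMalcevSuper (fun x y => g (br x y)) (fun x => alpha (g x)).
Proof.
case=> [[br_linl br_linr] br_even [lin_a a_even] [aM br_skew br_malcev]].
case=> lin_g g_even gM g_alpha.
split.
- split=> [x|y] a u v.
    by rewrite br_linl (linear_funD lin_g) (linear_funZ lin_g).
  by rewrite br_linr (linear_funD lin_g) (linear_funZ lin_g).
- by move=> bx by' x y hx hy; apply/g_even/br_even.
- split=> [a u v|b x hx]; first by rewrite lin_g lin_a.
  exact/a_even/g_even.
split.
- by move=> x y; rewrite !gM aM !g_alpha.
- move=> bx by' x y hx hy.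
  by rewrite (br_skew bx by') // (linear_funN lin_g) (linear_funZ lin_g).
move=> bx by' bz bt x y z t hx hy hz ht.
rewrite !(superJ_twist lin_g gM g_alpha) -!g_alpha -!gM -!(superJ_morph lin_g gM g_alpha).
rewrite -!(linear_funZ lin_g) -!(linear_funD lin_g).
by rewrite (br_malcev bx by' bz bt).
Qed.

End Twist.

Theorem mainTheorem10 (K : closedFieldType) (A0 A1 : lmodType K)
  (pcharK : [pchar K] =i pred0)
  (br : (A0 * A1)%type -> (A0 * A1)%type -> (A0 * A1)%type)
  (alpha : (A0 * A1)%type -> (A0 * A1)%type) :
  HomMalcevSuper br alpha ->
  forall n : nat,
    HomMalcevSuper (derived_bracket br alpha n) (derived_twist alpha n).
Proof.
move=> hom_malcev n; have [_ _ a_even [aM _ _]] := hom_malcev.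
have -> : derived_twist alpha n = iter (2 ^ n - 1).+1 alpha.
  by rewrite /derived_twist subn1 prednK // expn_gt0.
apply: (HomMalcevSuper_twist (br := br) (alpha := alpha)
         (g := iter (2 ^ n - 1) alpha)) => //.
- exact: even_map_iter.
- exact: iter_morph2.
- by move=> x; rewrite -iterSr iterS.
Qed.
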